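(* A perfect Euler cuboid exists if and only if there exist rational numbers $a,b,u$ with $0<u<1$ and $(a,b)\in D_{ab}$ such that $P(a,b,u)=0$.
   Context: An Euler cuboid is a rectangular parallelepiped whose three edge lengths and three face diagonal lengths are all positive integers; a perfect Euler cuboid is an Euler cuboid whose space diagonal also has integer length, i.e. a $7$-tuple of positive integers $(a,b,c,\alpha,\beta,\gamma,d)$ with $a^2+b^2=\gamma^2$, $b^2+c^2=\alpha^2$, $c^2+a^2=\beta^2$, $a^2+b^2+c^2=d^2$. Let $D_{uz}=\{(u,z)\in\mathbb{R}^2: 0<u<1,\ 0<z<1\}$. Define $f\colon D_{uz}\to\mathbb{R}^2$ by $f(u,z)=(a(u,z),b(u,z))$, where $a(u,z)$ and $b(u,z)$ are the positive real numbers determined by $$a^2=\frac{u^2+z^2}{u^2z^2+1},\qquad b^2=\frac{(1+u^2)(1+z^2)-2z(1-u^2)}{(1+u^2)(1+z^2)+2z(1-u^2)}$$ (both right-hand sides are positive on $D_{uz}$), and let $D_{ab}=f(D_{uz})$. The characteristic polynomial is $$\begin{aligned}P(a,b,u)={}&u^4a^4b^4+6a^4u^2b^4-2u^4a^4b^2-2u^4a^2b^4+4u^2b^4a^2+4a^4u^2b^2-12u^4a^2b^2\\&+u^4a^4+u^4b^4+a^4b^4+6a^4u^2+6u^2b^4-8a^2b^2u^2-2u^4a^2-2u^4b^2-2a^4b^2-2b^4a^2\\&+u^4+b^4+a^4+4a^2u^2+4b^2u^2-12b^2a^2+6u^2-2a^2-2b^2+1.\end{aligned}$$ *)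

From Stdlib Require Import Reals ZArith QArith Qreals.
Open Scope R_scope.

Definition perfect_euler_cuboid (a b c al be ga d : Z) : Prop :=
  (0 < a)%Z /\ (0 < b)%Z /\ (0 < c)%Z /\ (0 < al)%Z /\ (0 < be)%Z /\
  (0 < ga)%Z /\ (0 < d)%Z /\
  (a^2 + b^2 = ga^2)%Z /\ (b^2 + c^2 = al^2)%Z /\ (c^2 + a^2 = be^2)%Z /\
  (a^2 + b^2 + c^2 = d^2)%Z.

Definition perfect_euler_cuboid_exists : Prop :=
  exists a b c al be ga d : Z, perfect_euler_cuboid a b c al be ga d.

Definition f_a (u z : R) : R :=
  sqrt ((u^2 + z^2) / (u^2 * z^2 + 1)).
Definition f_b (u z : R) : R :=
  sqrt (((1 + u^2) * (1 + z^2) - 2 * z * (1 - u^2)) /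
        ((1 + u^2) * (1 + z^2) + 2 * z * (1 - u^2))).

Definition in_Dab (a b : R) : Prop :=
  exists u z : R, 0 < u < 1 /\ 0 < z < 1 /\ a = f_a u z /\ b = f_b u z.

Definition charP (a b u : R) : R :=
  u^4*a^4*b^4 + 6*a^4*u^2*b^4 - 2*u^4*a^4*b^2 - 2*u^4*a^2*b^4
  + 4*u^2*b^4*a^2 + 4*a^4*u^2*b^2 - 12*u^4*a^2*b^2
  + u^4*a^4 + u^4*b^4 + a^4*b^4 + 6*a^4*u^2 + 6*u^2*b^4
  - 8*a^2*b^2*u^2 - 2*u^4*a^2 - 2*u^4*b^2 - 2*a^4*b^2 - 2*b^4*a^2
  + u^4 + b^4 + a^4 + 4*a^2*u^2 + 4*b^2*u^2 - 12*b^2*a^2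
  + 6*u^2 - 2*a^2 - 2*b^2 + 1.

From Stdlib Require Import Reals ZArith QArith Qreals Lra Lia Psatz.
Open Scope R_scope.

(** Writing [t = tan (θ/2)] one has [cos θ = (1 - t^2)/(1 + t^2)] and
    [sin θ = 2t/(1 + t^2)] ([circ_x t] and [circ_y t]).  In these terms
    [P(a,b,u) = 0] says [cos α^2 + cos β^2 = cos γ^2], and the map [f] says
    [cos α = cos γ cos ζ], [cos β = cos γ sin ζ], where [a, b, u, z] are the
    half-tangents of [α, β, γ, ζ].  A perfect cuboid with edges [A, B, C],
    face diagonal [G = √(A²+B²)] and space diagonal [D] gives such angles:
    [cos α = A/D], [cos β = B/D], [cos γ = G/D], [cos ζ = A/G]; their
    half-tangents are rational.  Conversely rational half-tangents give
    rational points on the unit circle, and clearing denominators in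
    [cos α^2 + cos β^2 = cos γ^2] yields an integral perfect cuboid. *)

Definition circ_x (t : R) : R := (1 - t^2) / (1 + t^2).
Definition circ_y (t : R) : R := 2 * t / (1 + t^2).

Lemma sqr_eq_circ_x (t : R) : t^2 = (1 - circ_x t) / (1 + circ_x t).
Proof. unfold circ_x; field; nra. Qed.

Lemma circ_x_inj_nonneg (s t : R) :
  0 <= s -> 0 <= t -> circ_x s = circ_x t -> s = t.
Proof.
  intros hs ht E.
  assert (st : s^2 = t^2) by now rewrite (sqr_eq_circ_x s), (sqr_eq_circ_x t), E.
  nra.
Qed.

Lemma circ_x_frac (p q : R) : q <> 0 ->
  circ_x (p / q) = (q * q - p * p) / (q * q + p * p).
Proof. intros hq; unfold circ_x; field; split; [nra | exact hq]. Qed.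

Lemma circ_x_half_tangent (x y d : R) : y <> 0 -> d <> 0 -> x^2 + y^2 = d^2 ->
  circ_x ((d - x) / y) = x / d.
Proof.
  intros hy hd E; unfold circ_x.
  replace (1 - ((d - x) / y)^2) with ((y^2 - (d - x)^2) / y^2) by (field; exact hy).
  replace (1 + ((d - x) / y)^2) with ((y^2 + (d - x)^2) / y^2) by (field; exact hy).
  replace (y^2) with ((d - x) * (d + x)) at 1 3 by nra.
  assert (hdx : d - x <> 0) by (intros h; assert (x = d) by lra; subst; nra).
  field; repeat split; try assumption; nra.
Qed.

Lemma circ_y_half_tangent (x y d : R) : y <> 0 -> d <> 0 -> x^2 + y^2 = d^2 ->
  circ_y ((d - x) / y) = y / d.
Proof.
  intros hy hd E; unfold circ_y.
  replace (1 + ((d - x) / y)^2) with ((y^2 + (d - x)^2) / y^2) by (field; exact hy).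
  replace (y^2) with ((d - x) * (d + x)) at 1 by nra.
  assert (hdx : d - x <> 0) by (intros h; assert (x = d) by lra; subst; nra).
  field; repeat split; try assumption; nra.
Qed.

Lemma frac_in_unit_interval (x y : R) : 0 < x < y -> 0 < x / y < 1.
Proof.
  intros hxy; split; [apply Rdiv_lt_0_compat; lra |].
  apply Rmult_lt_reg_r with y; [lra |].
  unfold Rdiv; rewrite Rmult_assoc, Rinv_l; lra.
Qed.

Lemma half_tangent_in_unit_interval (x y d : R) :
  0 < x -> 0 < y -> 0 < d -> x^2 + y^2 = d^2 -> 0 < (d - x) / y < 1.
Proof. intros hx hy hd E; apply frac_in_unit_interval; nra. Qed.

Lemma charP_circ_x (a b u : R) : charP a b u =
  ((1 + a^2) * (1 + b^2) * (1 + u^2))^2 * (circ_x a ^2 + circ_x b ^2 - circ_x u ^2).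
Proof. unfold charP, circ_x; field; repeat split; nra. Qed.

Lemma circ_x_pythagorean_of_charP_root (a b u : R) :
  charP a b u = 0 -> circ_x a ^2 + circ_x b ^2 = circ_x u ^2.
Proof.
  rewrite charP_circ_x; intros E.
  apply Rmult_integral in E as [E | E]; [| lra].
  exfalso; apply (pow_nonzero _ 2 (ltac:(nra) : (1 + a^2) * (1 + b^2) * (1 + u^2) <> 0)), E.
Qed.

Lemma circ_x_f_a (u z : R) : circ_x (f_a u z) = circ_x u * circ_x z.
Proof.
  unfold circ_x, f_a.
  rewrite pow2_sqrt by (apply Rle_mult_inv_pos; nra).
  field; repeat split; nra.
Qed.

Lemma circ_x_f_b (u z : R) : 0 < u < 1 -> 0 < z < 1 ->
  circ_x (f_b u z) = circ_x u * circ_y z.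
Proof.
  intros hu hz; unfold circ_x, circ_y, f_b.
  rewrite pow2_sqrt by (apply Rle_mult_inv_pos; nra).
  field; repeat split; nra.
Qed.

Lemma sqrt_in_unit_interval (E : R) : 0 < E < 1 -> 0 < sqrt E < 1.
Proof.
  intros hE; split; [now apply sqrt_lt_R0 |].
  rewrite <- sqrt_1; apply sqrt_lt_1_alt; lra.
Qed.

Lemma in_Dab_unit_interval (a b : R) : in_Dab a b -> 0 < a < 1 /\ 0 < b < 1.
Proof.
  intros (u & z & hu & hz & -> & ->); unfold f_a, f_b.
  split; apply sqrt_in_unit_interval, frac_in_unit_interval.
  - assert (0 < (1 - u^2) * (1 - z^2)) by (apply Rmult_lt_0_compat; nra).
    nra.
  - assert (0 < z * (1 - u^2)) by (apply Rmult_lt_0_compat; nra).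
    assert (0 <= (1 + u^2) * (1 - z)^2) by (apply Rmult_le_pos; nra).
    assert (0 < z * u^2) by (apply Rmult_lt_0_compat; nra).
    split; nra.
Qed.

Lemma charP_root_of_cuboid_triangles (A B C Al Be G D : R) :
  0 < A -> 0 < B -> 0 < C -> 0 < Al -> 0 < Be -> 0 < G -> 0 < D ->
  A^2 + B^2 = G^2 -> A^2 + Al^2 = D^2 -> B^2 + Be^2 = D^2 -> G^2 + C^2 = D^2 ->
  0 < (D - G) / C < 1 /\ in_Dab ((D - A) / Al) ((D - B) / Be) /\
  charP ((D - A) / Al) ((D - B) / Be) ((D - G) / C) = 0.
Proof.
  intros hA hB hC hAl hBe hG hD EG EA EB ED.
  set (a := (D - A) / Al); set (b := (D - B) / Be); set (u := (D - G) / C).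
  set (z := (G - A) / B).
  assert (ca : circ_x a = A / D) by (apply circ_x_half_tangent; lra).
  assert (cb : circ_x b = B / D) by (apply circ_x_half_tangent; lra).
  assert (cu : circ_x u = G / D) by (apply circ_x_half_tangent; lra).
  assert (cz : circ_x z = A / G) by (apply circ_x_half_tangent; lra).
  assert (sz : circ_y z = B / G) by (apply circ_y_half_tangent; lra).
  assert (ha : 0 < a < 1) by (apply half_tangent_in_unit_interval; assumption).
  assert (hb : 0 < b < 1) by (apply half_tangent_in_unit_interval; assumption).
  assert (hu : 0 < u < 1) by (apply half_tangent_in_unit_interval; assumption).
  assert (hz : 0 < z < 1) by (apply half_tangent_in_unit_interval; assumption).
  split; [exact hu | split].
  - exists u, z; split; [exact hu | split; [exact hz | split]].
    + apply circ_x_inj_nonneg; [lra | apply sqrt_pos |].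
      rewrite circ_x_f_a, ca, cu, cz; field; lra.
    + apply circ_x_inj_nonneg; [lra | apply sqrt_pos |].
      rewrite circ_x_f_b, cb, cu, sz by assumption; field; lra.
  - rewrite charP_circ_x, ca, cb, cu.
    replace ((A / D)^2 + (B / D)^2 - (G / D)^2) with ((A^2 + B^2 - G^2) / D^2)
      by (field; lra).
    rewrite EG; unfold Rdiv; ring.
Qed.

Lemma pythagorean_clear_denominators (x1 n1 x2 n2 x3 n3 : R) :
  n1 <> 0 -> n2 <> 0 -> n3 <> 0 ->
  (x1 / n1)^2 + (x2 / n2)^2 = (x3 / n3)^2 ->
  (x1 * n2 * n3)^2 + (x2 * n1 * n3)^2 = (x3 * n1 * n2)^2.
Proof.
  intros h1 h2 h3 E.
  replace ((x1 * n2 * n3)^2 + (x2 * n1 * n3)^2)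
    with (((x1 / n1)^2 + (x2 / n2)^2) * (n1 * n2 * n3)^2) by (field; tauto).
  rewrite E; field; exact h3.
Qed.

Lemma perfect_euler_cuboid_of_triangles (a b c al be ga d : Z) :
  (0 < a)%Z -> (0 < b)%Z -> (0 < c)%Z -> (0 < al)%Z -> (0 < be)%Z ->
  (0 < ga)%Z -> (0 < d)%Z ->
  (a^2 + b^2 = ga^2)%Z -> (a^2 + al^2 = d^2)%Z -> (b^2 + be^2 = d^2)%Z ->
  (ga^2 + c^2 = d^2)%Z ->
  perfect_euler_cuboid a b c al be ga d.
Proof. intros; repeat split; lia. Qed.

Lemma scale_pythagorean (x y n k : Z) :
  (x^2 + y^2 = n^2)%Z -> ((x * k)^2 + (y * k)^2 = (n * k)^2)%Z.
Proof.
  intros E.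
  replace ((x * k)^2 + (y * k)^2)%Z with ((x^2 + y^2) * k^2)%Z by ring.
  rewrite E; ring.
Qed.

Lemma perfect_euler_cuboid_of_circle_points (xa ya na xb yb nb xu yu nu : Z) :
  (0 < xa)%Z -> (0 < ya)%Z -> (0 < na)%Z -> (0 < xb)%Z -> (0 < yb)%Z ->
  (0 < nb)%Z -> (0 < xu)%Z -> (0 < yu)%Z -> (0 < nu)%Z ->
  (xa^2 + ya^2 = na^2)%Z -> (xb^2 + yb^2 = nb^2)%Z -> (xu^2 + yu^2 = nu^2)%Z ->
  ((xa * (nb * nu))^2 + (xb * (na * nu))^2 = (xu * (na * nb))^2)%Z ->
  perfect_euler_cuboid_exists.
Proof.
  intros hxa hya hna hxb hyb hnb hxu hyu hnu Ea Eb Eu E.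
  exists (xa * (nb * nu))%Z, (xb * (na * nu))%Z, (yu * (na * nb))%Z,
    (ya * (nb * nu))%Z, (yb * (na * nu))%Z, (xu * (na * nb))%Z, (na * (nb * nu))%Z.
  apply perfect_euler_cuboid_of_triangles;
    [repeat apply Z.mul_pos_pos; assumption .. | exact E | now apply scale_pythagorean | |].
  - replace (na * (nb * nu))%Z with (nb * (na * nu))%Z by ring.
    now apply scale_pythagorean.
  - replace (na * (nb * nu))%Z with (nu * (na * nb))%Z by ring.
    now apply scale_pythagorean.
Qed.

Lemma circle_point_pos (p q : Z) : (0 < p < q)%Z ->
  (0 < q * q - p * p)%Z /\ (0 < 2 * p * q)%Z /\ (0 < q * q + p * p)%Z.
Proof. intros hpq; repeat split; nia. Qed.

Lemma perfect_euler_cuboid_of_charP_root (pa qa pb qb pu qu : Z) :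
  (0 < pa < qa)%Z -> (0 < pb < qb)%Z -> (0 < pu < qu)%Z ->
  charP (IZR pa / IZR qa) (IZR pb / IZR qb) (IZR pu / IZR qu) = 0 ->
  perfect_euler_cuboid_exists.
Proof.
  intros ha hb hu HP.
  destruct (circle_point_pos _ _ ha) as (hxa & hya & hna).
  destruct (circle_point_pos _ _ hb) as (hxb & hyb & hnb).
  destruct (circle_point_pos _ _ hu) as (hxu & hyu & hnu).
  apply circ_x_pythagorean_of_charP_root in HP.
  rewrite !circ_x_frac in HP by (apply not_0_IZR; lia).
  assert (nz : forall p q : Z, (0 < q)%Z -> IZR q * IZR q + IZR p * IZR p <> 0).
  { intros p q hq; assert (0 < IZR q) by (apply IZR_lt; exact hq); nra. }
  apply (pythagorean_clear_denominators _ _ _ _ _ _ (nz pa qa ltac:(lia))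
    (nz pb qb ltac:(lia)) (nz pu qu ltac:(lia))) in HP.
  apply (perfect_euler_cuboid_of_circle_points
           (qa * qa - pa * pa) (2 * pa * qa) (qa * qa + pa * pa)
           (qb * qb - pb * pb) (2 * pb * qb) (qb * qb + pb * pb)
           (qu * qu - pu * pu) (2 * pu * qu) (qu * qu + pu * pu));
    [assumption .. | ring | ring | ring |].
  apply eq_IZR; rewrite !Z.pow_2_r in *.
  repeat rewrite ?plus_IZR, ?minus_IZR, ?mult_IZR.
  lra.
Qed.

Lemma IZR_pythagorean (x y z : Z) :
  (x^2 + y^2 = z^2)%Z -> IZR x ^2 + IZR y ^2 = IZR z ^2.
Proof.
  intros E; rewrite !Z.pow_2_r in E; apply (f_equal IZR) in E.
  rewrite plus_IZR, !mult_IZR in E; lra.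
Qed.

Lemma Q2R_Qmake (n m : Z) : (0 < m)%Z -> Q2R (n # Z.to_pos m) = IZR n / IZR m.
Proof. intros hm; unfold Q2R; simpl; rewrite Z2Pos.id; [reflexivity | exact hm]. Qed.

Lemma Qnum_Qden_of_unit_interval (r : Q) :
  0 < Q2R r < 1 -> (0 < Qnum r < Z.pos (Qden r))%Z.
Proof.
  intros hr.
  assert (hd : 0 < IZR (Z.pos (Qden r))) by (apply IZR_lt; reflexivity).
  assert (hn : IZR (Qnum r) = Q2R r * IZR (Z.pos (Qden r))) by (unfold Q2R; field; lra).
  split; apply lt_IZR; nra.
Qed.

Lemma charP_rational_root_of_perfect_euler_cuboid :
  perfect_euler_cuboid_exists ->
  exists a b u : Q,
    0 < Q2R u < 1 /\ in_Dab (Q2R a) (Q2R b) /\ charP (Q2R a) (Q2R b) (Q2R u) = 0.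
Proof.
  intros (a & b & c & al & be & ga & d & ha & hb & hc & hal & hbe & hga & hd
          & Eab & Ebc & Eca & Eabc).
  assert (Eaal : (a^2 + al^2 = d^2)%Z) by lia.
  assert (Ebbe : (b^2 + be^2 = d^2)%Z) by lia.
  assert (Egac : (ga^2 + c^2 = d^2)%Z) by lia.
  exists ((d - a) # Z.to_pos al), ((d - b) # Z.to_pos be), ((d - ga) # Z.to_pos c).
  rewrite !Q2R_Qmake, !minus_IZR by assumption.
  apply charP_root_of_cuboid_triangles; try (apply IZR_lt; assumption);
    apply IZR_pythagorean; assumption.
Qed.

Lemma perfect_euler_cuboid_of_charP_rational_root :
  (exists a b u : Q,
    0 < Q2R u < 1 /\ in_Dab (Q2R a) (Q2R b) /\ charP (Q2R a) (Q2R b) (Q2R u) = 0) ->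
  perfect_euler_cuboid_exists.
Proof.
  intros (a & b & u & hu & hab & HP).
  destruct (in_Dab_unit_interval _ _ hab) as [ha hb].
  apply (perfect_euler_cuboid_of_charP_root (Qnum a) (Z.pos (Qden a))
           (Qnum b) (Z.pos (Qden b)) (Qnum u) (Z.pos (Qden u)));
    [now apply Qnum_Qden_of_unit_interval .. | exact HP].
Qed.

Theorem theorem5p2 :
  perfect_euler_cuboid_exists <->
  exists a b u : Q,
    0 < Q2R u < 1 /\ in_Dab (Q2R a) (Q2R b) /\
    charP (Q2R a) (Q2R b) (Q2R u) = 0.
Proof.
  split.
  - exact charP_rational_root_of_perfect_euler_cuboid.
  - exact perfect_euler_cuboid_of_charP_rational_root.
Qed.
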